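(* Let $M\in\mathcal H(m,n)$, $m+n=4$, $m,n\ge1$, be horizontally periodic with exactly three horizontal cylinders $C_1,C_2,C_3$ whose core curves are linearly independent in $H_1(M;\mathbb R)$. Suppose that no horizontal saddle connection lies in both the top and the bottom boundary of the same cylinder, and that none of $C_1,C_2,C_3$ is semi-simple. Then, up to relabeling, the cylinder diagram of $M$ is the following unique one: there are six horizontal saddle connections $1,\dots,6$; reading left to right, the top boundary of $C_1$ is $1,2$ and its bottom is $4,5$; the top of $C_2$ is $5,3$ and its bottom is $2,6$; the top of $C_3$ is $6,4$ and its bottom is $3,1$ (a saddle connection in the top of one cylinder is glued to the same-labelled saddle connection in the bottom of another). In particular each pair of cylinders shares exactly two saddle connections.
   Context: A cylinder is semi-simple if one of its two boundary components consists of a single horizontal saddle connection. A cylinder diagram records the horizontal cylinders together with the cyclically ordered sequences of saddle connections forming their top and bottom boundaries and their identifications, ignoring lengths. A horizontally periodic surface in a genus three stratum with two zeros has exactly six horizontal saddle connections. *)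

From HB Require Import structures.
From mathcomp Require Import all_boot all_order all_algebra all_fingroup.
Set Implicit Arguments. Unset Strict Implicit. Unset Printing Implicit Defensive.
Import Order.TTheory GRing.Theory Num.Theory.

(* A cylinder diagram with 3 horizontal cylinders ('I_3) and the 6 horizontal
   saddle connections ('I_6) of a horizontally periodic surface in a genus 3
   stratum with two zeros.  [top D i] (resp. [bot D i]) is the cyclic sequence
   of saddle connections read left to right along the top (resp. bottom)
   boundary of cylinder i.  Saddle connection s in the top of one cylinder is
   glued to s in the bottom of another one. *)
Record cyl_diagram := CylDiagram {
  top : 'I_3 -> seq 'I_6;
  bot : 'I_3 -> seq 'I_6 }.

Definition well_formed (D : cyl_diagram) : bool :=
  [&& perm_eq (flatten [seq top D i | i <- enum 'I_3]) (enum 'I_6),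
      perm_eq (flatten [seq bot D i | i <- enum 'I_3]) (enum 'I_6) &
      [forall i, (top D i != [::]) && (bot D i != [::])]].

(* there are positive lengths of the saddle connections making the top and
   bottom of every cylinder of equal length (heights and twists are free) *)
Definition realizable (D : cyl_diagram) : Prop :=
  exists l : 'I_6 -> nat, (forall s, 0 < l s) /\
    forall i, \sum_(s <- top D i) l s = \sum_(s <- bot D i) l s.

Definition cyl_adj (D : cyl_diagram) : rel 'I_3 :=
  fun i j => has (mem (bot D j)) (top D i) || has (mem (bot D i)) (top D j).
Definition connected_diagram (D : cyl_diagram) : Prop :=
  forall i j : 'I_3, connect (cyl_adj D) i j.

(* Endpoints of saddle connections: (s,false) = left end, (s,true) = right end.
   Consecutive saddle connections s, t (cyclically) in a boundary component
   meet at a point: the right end of s is the left end of t. *)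
Definition endpoint := ('I_6 * bool)%type.
Definition junction (D : cyl_diagram) (x y : endpoint) : bool :=
  [exists i : 'I_3, [&& x.2, ~~ y.2, x.1 \in top D i & y.1 == next (top D i) x.1]]
  || [exists i : 'I_3, [&& x.2, ~~ y.2, x.1 \in bot D i & y.1 == next (bot D i) x.1]].
Definition vrel (D : cyl_diagram) : rel endpoint :=
  fun x y => junction D x y || junction D y x.
Definition same_vertex (D : cyl_diagram) (x y : endpoint) : bool :=
  connect (vrel D) x y.

(* Each endpoint at a vertex corresponds to one junction there, and each
   junction contributes a sector of angle pi; so the cone angle at a vertex is
   pi * (number of endpoints identified with it).  The surface lies in
   H(m,n): exactly two singular points, of cone angles 2pi(m+1), 2pi(n+1). *)
Definition in_stratum (D : cyl_diagram) (m n : nat) : Prop :=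
  exists v w : endpoint,
    [/\ ~~ same_vertex D v w,
        forall e, same_vertex D v e || same_vertex D w e,
        #|[set e | same_vertex D v e]| = 2 * m.+1 &
        #|[set e | same_vertex D w e]| = 2 * n.+1].

Definition diagram_in_stratum (D : cyl_diagram) (m n : nat) : Prop :=
  [/\ well_formed D, realizable D, connected_diagram D & in_stratum D m n].

(* Cellular structure: 0-cells the zeros, 1-cells the saddle
   connections plus one transversal per cylinder, 2-cells the cylinders cut
   along their transversal, with boundary  sum(bottom) - sum(top)  (the
   transversal cancels).  The core curve of C_i is homologous to the cycle
   sum(top of C_i).  Linear independence of the core curves in H_1(M;R):
   a combination  sum a_i top_i  lies in the image of the boundary map only
   for a = 0.  (Coefficients in rat: the matrices are rational, so this is
   equivalent to the statement over R.) *)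
Local Open Scope ring_scope.
Definition ind (b : bool) : rat := (b : nat)%:R.
Definition core_curves_independent (D : cyl_diagram) : Prop :=
  forall a b : 'I_3 -> rat,
    (forall s : 'I_6,
       \sum_(i < 3) a i * ind (s \in top D i)
       = \sum_(j < 3) b j * (ind (s \in bot D j) - ind (s \in top D j))) ->
    forall i, a i = 0.
Local Close Scope ring_scope.

Definition no_self_glued (D : cyl_diagram) : Prop :=
  forall (i : 'I_3) (s : 'I_6), ~~ ((s \in top D i) && (s \in bot D i)).

Definition semi_simple (D : cyl_diagram) (i : 'I_3) : bool :=
  (size (top D i) == 1) || (size (bot D i) == 1).

(* The target diagram, with labels 1..6 written 0..5:
   C1: top 1,2  bottom 4,5 ; C2: top 5,3  bottom 2,6 ; C3: top 6,4 bottom 3,1 *)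
Definition o6 (k : nat) : 'I_6 := inord k.
Definition std_top (i : 'I_3) : seq 'I_6 :=
  map o6 (nth [::] [:: [:: 0; 1]; [:: 4; 2]; [:: 5; 3]] i).
Definition std_bot (i : 'I_3) : seq 'I_6 :=
  map o6 (nth [::] [:: [:: 3; 4]; [:: 1; 5]; [:: 2; 0]] i).

Definition cyc_eq (s t : seq 'I_6) : Prop := exists r, s = rot r t.

Definition iso_std (D : cyl_diagram) : Prop :=
  exists (sigma : {perm 'I_3}) (tau : {perm 'I_6}),
    forall i : 'I_3,
      cyc_eq (top D (sigma i)) (map tau (std_top i)) /\
      cyc_eq (bot D (sigma i)) (map tau (std_bot i)).

Definition bdry (D : cyl_diagram) (i : 'I_3) : seq 'I_6 := top D i ++ bot D i.
Definition pairs_share_two (D : cyl_diagram) : Prop :=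
  forall i j : 'I_3, i != j ->
    #|[set s : 'I_6 | (s \in bdry D i) && (s \in bdry D j)]| = 2.

From mathcomp Require Import all_boot all_order all_algebra all_fingroup zify.
Set Implicit Arguments. Unset Strict Implicit. Unset Printing Implicit Defensive.

(* Since no cylinder is semi-simple and there are only six saddle connections,
   every boundary component consists of exactly two of them.  If the whole top
   of C_i were glued onto the bottom of C_j, the right end of its first saddle
   connection and the left end of its second would be identified with each
   other only: a point of cone angle 2 pi, which is not a zero of order >= 1.
   After relabelling the saddle connections so that the tops are those of the
   standard diagram, there remain 720 ways to fill in the bottoms, and a
   computation shows that the ones without self-gluing or full gluing are all
   isomorphic to the standard diagram. *)

Lemma sizes_eq_of_flatten (T : Type) (I : finType) (f : I -> seq T) c :
  (forall i, c <= size (f i)) -> size (flatten [seq f i | i <- enum I]) = #|I| * c ->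
  forall i, size (f i) = c.
Proof.
move=> ge_c; rewrite size_flatten /shape -map_comp sumnE big_map big_enum /=.
move=> /esym/eqP; rewrite -sum_nat_const.
have [_ ->] := @leqif_sum I xpredT _ (fun=> c) _ (fun i _ => leqif_eq (ge_c i)).
by move=> /forall_inP + i => /(_ i isT) /eqP.
Qed.

Lemma nth_reshape_flatten (T : Type) (I : finType) (f : I -> seq T) c i :
  (forall j, size (f j) = c) ->
  f i = nth [::] (reshape (nseq #|I| c) (flatten [seq f j | j <- enum I])) (index i (enum I)).
Proof.
move=> sz_f; have -> : nseq #|I| c = shape [seq f j | j <- enum I].
  rewrite cardE -(size_map f) -(size_map size); apply/esym/all_pred1P/allP.
  by rewrite /shape -map_comp => _ /mapP [j _ ->]; rewrite /= sz_f.
by rewrite flattenK (nth_map i) ?nth_index ?index_mem ?mem_enum.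
Qed.

Lemma uniq_flatten_enum (T : eqType) (I : finType) (f : I -> seq T) :
  uniq (flatten [seq f j | j <- enum I]) ->
  (forall i, uniq (f i)) /\ (forall x i k, x \in f i -> x \in f k -> i = k).
Proof.
move=> uniq_f; pose F x j := count_mem x (f j).
have sum_le1 x : \sum_j F x j <= 1.
  move: (count_uniq_mem x uniq_f); rewrite count_flatten sumnE -map_comp big_map big_enum /=.
  by move=> ->; apply: leq_b1.
have split_sum x i : \sum_j F x j = F x i + \sum_(j | j != i) F x j by rewrite (bigD1 i).
split=> [i | x i k x_i x_k].
  apply: count_mem_uniq => x; rewrite -has_pred1 has_count.
  by have := sum_le1 x; rewrite (split_sum x i) /F; lia.
apply/eqP; apply: contraT => ik; have := sum_le1 x; rewrite (split_sum x i).
have : F x k <= \sum_(j | j != i) F x j by rewrite (bigD1 k) 1?eq_sym //= leq_addr.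
by move: x_i x_k; rewrite /F -!has_pred1 !has_count; lia.
Qed.

Lemma exists_perm_map (T : finType) (s1 s2 : seq T) :
  perm_eq s1 (enum T) -> perm_eq s2 (enum T) -> exists t : {perm T}, map t s1 = s2.
Proof.
move=> e1 e2; have [u1 u2] := (perm_uniq e1, perm_uniq e2); rewrite !enum_uniq in u1 u2.
have [sz1 sz2] := (perm_size e1, perm_size e2).
have s1T x : x \in s1 by rewrite (perm_mem e1) mem_enum.
pose f x := nth x s2 (index x s1).
have f_inj : injective f.
  move=> x y; rewrite /f (set_nth_default y) ?sz2 -?sz1 ?index_mem //.
  move/eqP; rewrite nth_uniq ?sz2 -?sz1 ?index_mem // => /eqP.
  by move/(congr1 (nth x s1)); rewrite !nth_index.
exists (perm f_inj).
have -> : map (perm f_inj) s1 = map f s1 by apply: eq_map => x; rewrite permE.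
case Es1 : s1 => [|x0 s1']; first by apply/esym/size0nil; rewrite sz2 -sz1 Es1.
rewrite -Es1; apply: (@eq_from_nth _ x0); rewrite size_map ?sz1 ?sz2 // => k lt_k.
by rewrite (nth_map x0) ?sz1 // /f index_uniq ?sz1 // (set_nth_default x0) // sz2.
Qed.

Lemma next_pair (T : eqType) (s : seq T) a b : a != b -> perm_eq s [:: a; b] ->
  next s a = b /\ next s b = a.
Proof.
move=> ab /[dup] /perm_size; case: s => [|x [|y []]] //= _ /[dup] /perm_mem mem_s.
move=> /perm_uniq; rewrite /= !inE !andbT (negPf ab) => xy.
move: ab; have := mem_s a; have := mem_s b; rewrite !inE !eqxx !orbT.
by case/orP=> /eqP ->; case/orP=> /eqP ->; rewrite ?eqxx // ?(eq_sym y x) (negPf xy).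
Qed.

Lemma in_stratum_vertex_card D m n : 0 < m -> 0 < n -> in_stratum D m n ->
  forall e, 4 <= #|[set e' | same_vertex D e e']|.
Proof.
move=> m_gt0 n_gt0 [v [w [_ cover cv cw]]] e.
have vertex_sym : connect_sym (vrel D) by apply: sym_connect_sym => x y; rewrite /vrel orbC.
have classE z : same_vertex D z e -> [set e' | same_vertex D e e'] = [set e' | same_vertex D z e'].
  by move=> ze; apply/setP => e'; rewrite !inE /same_vertex (same_connect vertex_sym ze).
by case/orP: (cover e) => /classE ->; rewrite ?cv ?cw; lia.
Qed.

Definition junction_in (s : seq 'I_6) (x y : endpoint) : bool :=
  [&& x.2, ~~ y.2, x.1 \in s & y.1 == next s x.1].

Lemma junction_in_pair s a b x y : a != b -> ((a \in s) || (b \in s) -> perm_eq s [:: a; b]) ->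
  junction_in s x y -> (x == (a, true)) = (y == (b, false)).
Proof.
move=> ab pair_s; case: x y => [u []] [v []] // /and4P [_ _ /= u_s /eqP /= ->].
case: (boolP ((a \in s) || (b \in s))) => [/pair_s eq_s | /norP [a_s b_s]].
  have [next_a next_b] := next_pair ab eq_s; move: u_s; rewrite (perm_mem eq_s) !inE.
  by case/orP=> /eqP ->; rewrite ?next_a ?next_b !xpair_eqE ?eqxx ?andbT // eq_sym.
have next_s : next s u \in s by rewrite mem_next.
rewrite !xpair_eqE !andbT.
have -> : (u == a) = false by apply: contraNF a_s => /eqP <-.
by apply/esym; apply: contraNF b_s => /eqP <-.
Qed.

Lemma junction_sides D x y : junction D x y -> x.2 && ~~ y.2.
Proof. by case/orP=> /existsP [k /and4P [-> -> _ _]]. Qed.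

Lemma full_gluing_vertex_card D i j a b : well_formed D ->
  top D i = [:: a; b] -> perm_eq (bot D j) [:: a; b] ->
  #|[set e | same_vertex D (a, true) e]| <= 2.
Proof.
case/and3P=> /perm_uniq uniq_top /perm_uniq uniq_bot _ top_i bot_j.
rewrite enum_uniq in uniq_top uniq_bot.
have [uniq_tops top_inj] := uniq_flatten_enum uniq_top.
have [_ bot_inj] := uniq_flatten_enum uniq_bot.
have ab : a != b by have := uniq_tops i; rewrite top_i /= inE andbT.
have junction_pair x y : junction D x y -> (x == (a, true)) = (y == (b, false)).
  case/orP=> /existsP [k J].
    apply: (@junction_in_pair (top D k)) J => // ab_k; suff -> : k = i by rewrite top_i.
    by case/orP: ab_k => /top_inj; apply; rewrite top_i !inE eqxx ?orbT.
  apply: (@junction_in_pair (bot D k)) J => // ab_k; suff -> : k = j by [].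
  by case/orP: ab_k => /bot_inj; apply; rewrite (perm_mem bot_j) !inE eqxx ?orbT.
pose P := [:: (a, true); (b, false)].
have vrel_sym : connect_sym (vrel D) by apply: sym_connect_sym => x y; rewrite /vrel orbC.
have closedP : closed (vrel D) P.
  apply: intro_closed => // x y /orP [] J; have := junction_sides J; have := junction_pair _ _ J.
    by rewrite !inE => -> /andP [x2 _] /orP [] /eqP x_ab; rewrite x_ab ?eqxx ?orbT // in x2 *.
  by rewrite !inE => <- /andP [_ x2] /orP [] /eqP x_ab; rewrite x_ab ?eqxx // in x2 *.
apply: leq_trans (card_size P); apply: subset_leq_card; apply/subsetP => e.
by rewrite inE /same_vertex => /(closed_connect closedP) <-; rewrite inE eqxx.
Qed.

Lemma in_stratum_no_full_gluing D m n i j : well_formed D -> 0 < m -> 0 < n ->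
  in_stratum D m n -> size (top D i) = 2 -> ~~ perm_eq (top D i) (bot D j).
Proof.
move=> wf m_gt0 n_gt0 st; case top_i: (top D i) => [|a [|b []]] // _.
rewrite perm_sym; apply/negP => /(full_gluing_vertex_card wf top_i) small.
by have := in_stratum_vertex_card m_gt0 n_gt0 st (a, true); lia.
Qed.

Definition relabeling (t : {perm 'I_6}) (D E : cyl_diagram) : Prop :=
  (forall i, top E i = map t (top D i)) /\ (forall i, bot E i = map t (bot D i)).

Lemma relabelingV t D E : relabeling t D E -> relabeling t^-1%g E D.
Proof.
have mapK s : s = map t^-1%g (map t s) by rewrite -map_comp map_id_in // => x _ /=; rewrite permK.
by case=> eT eB; split=> i; rewrite ?eT ?eB -mapK.
Qed.

Lemma mem_map_perm (T : finType) (t : {perm T}) (s : seq T) x : (x \in map t s) = (t^-1%g x \in s).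
Proof. by rewrite -{1}(permKV t x) (mem_map (@perm_inj _ t)). Qed.

Lemma no_self_glued_relabeling t D E : relabeling t D E -> no_self_glued D -> no_self_glued E.
Proof. by case=> eT eB nsD i s; rewrite eT eB !mem_map_perm. Qed.

Lemma pairs_share_two_relabeling t D E :
  relabeling t D E -> pairs_share_two D -> pairs_share_two E.
Proof.
case=> eT eB two i j ij; apply: etrans (two i j ij).
rewrite -(card_preimset _ (@perm_inj _ t)).
by apply: eq_card => s; rewrite !inE /bdry !eT !eB -!map_cat !(mem_map (@perm_inj _ t)).
Qed.

Lemma iso_std_relabeling t D E : relabeling t D E -> iso_std D -> iso_std E.
Proof.
case=> eT eB [sigma [tau isoD]]; exists sigma, (tau * t)%g => i.
have mapM s : map (tau * t)%g s = map t (map tau s).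
  by rewrite -map_comp; apply: eq_map => k; rewrite permM.
have [[r eTi] [r' eBi]] := isoD i.
by split; [exists r; rewrite eT eTi | exists r'; rewrite eB eBi]; rewrite map_rot mapM.
Qed.

Lemma perm_eq_relabeling t D E : relabeling t D E ->
  forall i j, perm_eq (top E i) (bot E j) = perm_eq (top D i) (bot D j).
Proof.
case=> eT eB i j; rewrite eT eB; apply/idP/idP; last exact: perm_map.
by apply: perm_map_inj; apply: perm_inj.
Qed.

(* Explicit ordinals: [ord_enum] and [inord] go through the opaque [idP] and do
   not reduce under [vm_compute]. *)
Definition cylinders : seq 'I_3 :=
  [:: Ordinal (isT : 0 < 3); Ordinal (isT : 1 < 3); Ordinal (isT : 2 < 3)].

Definition saddles : seq 'I_6 :=
  [:: Ordinal (isT : 0 < 6); Ordinal (isT : 1 < 6); Ordinal (isT : 2 < 6);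
      Ordinal (isT : 3 < 6); Ordinal (isT : 4 < 6); Ordinal (isT : 5 < 6)].

Lemma mem_cylinders i : i \in cylinders.
Proof. by case: i => [[|[|[|]]] ?]. Qed.

Lemma mem_saddles s : s \in saddles.
Proof. by case: s => [[|[|[|[|[|[|]]]]]] ?]. Qed.

Lemma perm_saddles : perm_eq saddles (enum 'I_6).
Proof. by apply: uniq_perm; rewrite ?enum_uniq // => s; rewrite mem_saddles mem_enum. Qed.

Definition diagram_of_flat (tp bp : seq 'I_6) : cyl_diagram :=
  CylDiagram (fun i => nth [::] (reshape (nseq 3 2) tp) i)
             (fun i => nth [::] (reshape (nseq 3 2) bp) i).

Definition std_tops : seq 'I_6 := map (nth ord0 saddles) [:: 0; 1; 4; 2; 5; 3].

Lemma relabeling_to_std_tops D : well_formed D ->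
  (forall i, size (top D i) = 2) -> (forall i, size (bot D i) = 2) ->
  exists t p, p \in permutations saddles /\ relabeling t D (diagram_of_flat std_tops p).
Proof.
case/and3P=> perm_top perm_bot _ size_top size_bot.
have perm_std : perm_eq std_tops (enum 'I_6) by apply: perm_trans perm_saddles; vm_compute.
have [t map_t] := exists_perm_map perm_top perm_std.
have flatE (f : 'I_3 -> seq 'I_6) (i : 'I_3) : (forall j, size (f j) = 2) ->
    nth [::] (reshape (nseq 3 2) (map t (flatten [seq f j | j <- enum 'I_3]))) i = map t (f i).
  move=> size_f; rewrite -map_reshape (nth_map [::]) ?size_reshape ?size_nseq //.
  by rewrite [in RHS](nth_reshape_flatten i size_f) card_ord index_enum_ord.
exists t, (map t (flatten [seq bot D i | i <- enum 'I_3])); split; last first.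
  by split=> i; rewrite -?map_t; apply: flatE.
rewrite mem_permutations; apply: perm_trans (perm_map t perm_bot) _.
apply: uniq_perm; rewrite ?(map_inj_uniq (@perm_inj _ t)) ?enum_uniq //.
by move=> s; rewrite mem_map_perm mem_enum mem_saddles.
Qed.

Definition no_self_gluedb (D : cyl_diagram) : bool :=
  all (fun i => ~~ has (mem (bot D i)) (top D i)) cylinders.

Definition full_gluing (D : cyl_diagram) : bool :=
  has (fun i => has (fun j => perm_eq (top D i) (bot D j)) cylinders) cylinders.

Definition glued (D : cyl_diagram) (i j : 'I_3) : 'I_6 :=
  head ord0 [seq s <- top D i | s \in bot D j].

(* Label k of the standard diagram is the saddle connection from the top of
   C_i to the bottom of C_j, where (i, j) is the k-th entry of [std_gluing]. *)
Definition std_gluing : seq (nat * nat) := [:: (0, 2); (0, 1); (1, 2); (2, 0); (1, 0); (2, 1)].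

Definition cross_label (D : cyl_diagram) (k : 'I_6) : 'I_6 :=
  let: (i, j) := nth (0, 0) std_gluing k in glued D (nth ord0 cylinders i) (nth ord0 cylinders j).

(* Reducible copies of [std_top] and [std_bot]. *)
Definition std_top_c (i : 'I_3) : seq 'I_6 :=
  map (nth ord0 saddles) (nth [::] [:: [:: 0; 1]; [:: 4; 2]; [:: 5; 3]] i).
Definition std_bot_c (i : 'I_3) : seq 'I_6 :=
  map (nth ord0 saddles) (nth [::] [:: [:: 3; 4]; [:: 1; 5]; [:: 2; 0]] i).

Definition cyc_eqb (T : eqType) (s t : seq T) : bool :=
  has (fun r => s == rot r t) (iota 0 (size t)).

Definition iso_stdb (D : cyl_diagram) : bool :=
  uniq (map (cross_label D) saddles) &&
  all (fun i => cyc_eqb (top D i) (map (cross_label D) (std_top_c i)) &&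
                cyc_eqb (bot D i) (map (cross_label D) (std_bot_c i))) cylinders.

Definition pairs_share_twob (D : cyl_diagram) : bool :=
  all (fun i => all (fun j => (i == j) ||
    (size [seq s <- saddles | (s \in bdry D i) && (s \in bdry D j)] == 2)) cylinders) cylinders.

Lemma std_tops_classification :
  all (fun p => let D := diagram_of_flat std_tops p in
       [|| ~~ no_self_gluedb D, full_gluing D | iso_stdb D && pairs_share_twob D])
    (permutations saddles).
Proof. by vm_compute. Qed.

Lemma no_self_gluedbP D : no_self_glued D -> no_self_gluedb D.
Proof. by move=> ns; apply/allP => i _; apply/hasPn => s s_top; move: (ns i s); rewrite s_top. Qed.

Lemma full_gluingP D : (forall i j, ~~ perm_eq (top D i) (bot D j)) -> ~~ full_gluing D.
Proof. by move=> no_full; apply/hasPn => i _; apply/hasPn => j _; apply: no_full. Qed.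

Lemma std_top_cE i : std_top_c i = std_top i.
Proof.
by case: i => [[|[|[|]]] ?] //; congr [:: _; _]; apply: val_inj; rewrite /= inordK.
Qed.

Lemma std_bot_cE i : std_bot_c i = std_bot i.
Proof.
by case: i => [[|[|[|]]] ?] //; congr [:: _; _]; apply: val_inj; rewrite /= inordK.
Qed.

Lemma cyc_eqbP s t : cyc_eqb s t -> cyc_eq s t.
Proof. by case/hasP=> r _ /eqP ->; exists r. Qed.

Lemma iso_stdbP D : iso_stdb D -> iso_std D.
Proof.
case/andP=> uniq_label cyc.
have label_inj : injective (cross_label D).
  apply/injectiveP; rewrite /injectiveb /dinjectiveb.
  by rewrite (perm_uniq (perm_map _ perm_saddles)) in uniq_label.
exists 1%g, (perm label_inj) => i; rewrite perm1 -std_top_cE -std_bot_cE.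
have labelE s : map (perm label_inj) s = map (cross_label D) s by apply: eq_map => k; rewrite permE.
by have /andP [] := allP cyc i (mem_cylinders i); rewrite !labelE => /cyc_eqbP ? /cyc_eqbP.
Qed.

Lemma pairs_share_twobP D : pairs_share_twob D -> pairs_share_two D.
Proof.
move=> two i j ij; have := allP (allP two i (mem_cylinders i)) j (mem_cylinders j).
rewrite (negPf ij) /= => /eqP size2; apply: etrans size2.
have /card_uniqP <- :=
  filter_uniq (fun s => (s \in bdry D i) && (s \in bdry D j)) (isT : uniq saddles).
by apply: eq_card => s; rewrite !inE mem_filter mem_saddles andbT.
Qed.

Lemma boundaries_size2 D : well_formed D -> (forall i, ~~ semi_simple D i) ->
  (forall i, size (top D i) = 2) /\ (forall i, size (bot D i) = 2).
Proof.
case/and3P=> /perm_size size_top /perm_size size_bot /forallP nonempty not_semi_simple.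
have ge2 i : 1 < size (top D i) /\ 1 < size (bot D i).
  move: (nonempty i) (not_semi_simple i); rewrite /semi_simple negb_or.
  by case: (top D i) => [|? [|? ?]]; case: (bot D i) => [|? [|? ?]].
by split; apply: sizes_eq_of_flatten;
  rewrite ?card_ord ?size_top ?size_bot ?size_enum_ord // => i; case: (ge2 i).
Qed.

Theorem mainTheorem20 (D : cyl_diagram) (m n : nat) :
  1 <= m -> 1 <= n -> m + n = 4 ->
  diagram_in_stratum D m n ->
  core_curves_independent D ->
  no_self_glued D ->
  (forall i : 'I_3, ~~ semi_simple D i) ->
  iso_std D /\ pairs_share_two D.
Proof.
move=> m_gt0 n_gt0 _ [wf _ _ st] _ no_self not_semi_simple.
have [size_top size_bot] := boundaries_size2 wf not_semi_simple.
have [t [p [p_perm tDE]]] := relabeling_to_std_tops wf size_top size_bot.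
set E := diagram_of_flat std_tops p in tDE.
have no_self_E := no_self_gluedbP (no_self_glued_relabeling tDE no_self).
have no_full_E : ~~ full_gluing E.
  apply: full_gluingP => i j.
  by rewrite (perm_eq_relabeling tDE) (in_stratum_no_full_gluing _ wf m_gt0 n_gt0 st).
have := allP std_tops_classification p p_perm; rewrite /= -/E no_self_E (negPf no_full_E) /=.
case/andP=> /iso_stdbP isoE /pairs_share_twobP twoE; have tED := relabelingV tDE.
by split; [apply: iso_std_relabeling tED isoE | apply: pairs_share_two_relabeling tED twoE].
Qed.
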